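(* In the setting below, the intersection $\bigcap_{\nu\subseteq\{0,\dots,n\},|\nu|=n}\mathrm{Im}(P^\pi_\nu)$ is the space of all constant maps $\phi\equiv x_0$ on $X(n)$ where $x_0\in\mathbb{E}$ is a fixed point of $\pi(G)$ (i.e. $\pi(g)x_0=x_0$ for all $g\in G$).
   Context: Setting: $X$ is a pure $n$-dimensional partite simplicial complex (vertex set partitioned into $V_0,\dots,V_n$, each $n$-simplex having one vertex in each $V_i$; $\mathrm{type}(\tau)=\{i:\tau\cap V_i\neq\emptyset\}$), gallery connected (any two $n$-simplices are joined by a sequence of $n$-simplices with consecutive ones sharing an $(n-1)$-face), with all $1$-dimensional links (links of $(n-2)$-simplices) connected finite graphs. $G$ is a locally compact unimodular group with Haar measure $\mu$ acting cocompactly on $X$ by type-preserving simplicial automorphisms, with $G_\tau$ open compact for every $\tau\in X(n-2)\cup X(n-1)\cup X(n)$; $\pi$ is a strongly continuous representation of $G$ on a Banach space $\mathbb{E}$. $D(n)$ is a set of representatives of the $G$-orbits on $X(n)$. $C(X(n),\pi)$ is the space of maps $\phi:X(n)\to\mathbb{E}$ with $\phi(g.\sigma)=\pi(g)\phi(\sigma)$ for all $g,\sigma$, normed by $\|\phi\|^2=\sum_{\sigma\in D(n)}\frac{1}{\mu(G_\sigma)}|\phi(\sigma)|^2$. For $\nu\subseteq\{0,\dots,n\}$ with $|\nu|\in\{n-1,n\}$, write $\sigma\sim_\nu\sigma'$ if there is a simplex $\tau\subseteq\sigma\cap\sigma'$ with $\mathrm{type}(\tau)=\nu$, and define $P^\pi_\nu\phi(\sigma)=\frac{1}{|\{\sigma':\sigma'\sim_\nu\sigma\}|}\sum_{\sigma'\sim_\nu\sigma}\phi(\sigma')$,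 a projection on $C(X(n),\pi)$. *)

From HB Require Import structures.
From mathcomp Require Import all_boot all_order all_algebra.
From mathcomp Require Import finmap.
From mathcomp Require Import all_classical all_reals all_analysis.
From Stdlib Require Import Relation_Operators.
Set Implicit Arguments. Unset Strict Implicit. Unset Printing Implicit Defensive.
Import Order.TTheory GRing.Theory Num.Theory.
Import numFieldNormedType.Exports.

Local Open Scope classical_set_scope.
Local Open Scope fset_scope.
Local Open Scope ring_scope.

Definition simplicial_complex (V : choiceType) (X : {fset V} -> Prop) :=
  (forall s, X s -> s != fset0) /\
  (forall s t, X s -> t `<=` s -> t != fset0 -> X t).

Definition simplex_of_dim (V : choiceType) (X : {fset V} -> Prop) (k : nat)
  (s : {fset V}) := X s /\ #|` s| = k.+1.

Definition pure_dim (V : choiceType) (X : {fset V} -> Prop) (n : nat) :=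
  forall s, X s -> (#|` s| <= n.+1)%N /\
    exists2 s', s `<=` s' & simplex_of_dim X n s'.

Definition partite (V : choiceType) (X : {fset V} -> Prop) (n : nat)
  (t : V -> 'I_n.+1) :=
  forall s, simplex_of_dim X n s ->
    forall i : 'I_n.+1, exists! v, v \in s /\ t v = i.

Definition stype (V : choiceType) (n : nat) (t : V -> 'I_n.+1) (tau : {fset V})
  : {fset 'I_n.+1} := [fset t v | v in tau].

Definition gallery_adj (V : choiceType) (X : {fset V} -> Prop) (n : nat)
  (s s' : {fset V}) :=
  simplex_of_dim X n s /\ simplex_of_dim X n s' /\
  exists tau, [/\ X tau, #|` tau| = n, tau `<=` s & tau `<=` s'].

Definition gallery_connected (V : choiceType) (X : {fset V} -> Prop) (n : nat) :=
  forall s s', simplex_of_dim X n s -> simplex_of_dim X n s' ->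
    clos_refl_trans _ (gallery_adj X n) s s'.

Definition link_vertex (V : choiceType) (X : {fset V} -> Prop) (tau : {fset V})
  (v : V) := v \notin tau /\ X (v |` tau).
Definition link_edge (V : choiceType) (X : {fset V} -> Prop) (tau : {fset V})
  (u v : V) := [/\ u != v, u \notin tau, v \notin tau & X (u |` (v |` tau))].

Definition links_finite_connected (V : choiceType) (X : {fset V} -> Prop)
  (n : nat) :=
  forall tau, X tau -> (#|` tau|).+1 = n ->
    finite_set (link_vertex X tau) /\
    forall u v, link_vertex X tau u -> link_vertex X tau v ->
      clos_refl_trans _ (link_edge X tau) u v.

Definition group_laws (G : Type) (mul : G -> G -> G) (inv : G -> G) (e : G) :=
  [/\ forall x y z, mul x (mul y z) = mul (mul x y) z,
      forall x, mul e x = x & forall x, mul (inv x) x = e].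

Definition lc_topological_group (G : topologicalType) (mul : G -> G -> G)
  (inv : G -> G) (e : G) :=
  [/\ group_laws mul inv e,
      continuous (fun p : G * G => mul p.1 p.2),
      continuous inv,
      hausdorff_space G &
      forall x : G, exists2 U, nbhs x U & compact U].

Definition act_simplex (G V : choiceType) (act : G -> V -> V) (g : G)
  (s : {fset V}) : {fset V} := [fset act g v | v in s].

Definition type_preserving_action (G V : choiceType) (mul : G -> G -> G)
  (e : G) (X : {fset V} -> Prop) (n : nat) (t : V -> 'I_n.+1)
  (act : G -> V -> V) :=
  [/\ forall v, act e v = v,
      forall g h v, act (mul g h) v = act g (act h v),
      forall g s, X s <-> X (act_simplex act g s) &
      forall g v, t (act g v) = t v].

Definition cocompact (G V : choiceType) (X : {fset V} -> Prop) (n : nat)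
  (act : G -> V -> V) :=
  exists D : {fset {fset V}},
    (forall s, s \in D -> simplex_of_dim X n s) /\
    forall s, simplex_of_dim X n s ->
      exists g, exists2 s0, s0 \in D & s = act_simplex act g s0.

Definition stabilizer (G V : choiceType) (act : G -> V -> V) (tau : {fset V})
  : set G := [set g | act_simplex act g tau = tau].

Definition strongly_continuous_rep (R : realType) (G : topologicalType)
  (E : normedModType R) (mul : G -> G -> G) (e : G) (pi : G -> E -> E) :=
  [/\ forall g, linear (pi g),
      forall g, continuous (pi g),
      forall x, pi e x = x,
      forall g h x, pi (mul g h) x = pi g (pi h x) &
      forall x, continuous (fun g => pi g x)].

Definition equivariant (G V : choiceType) (R : realType) (E : normedModType R)
  (X : {fset V} -> Prop) (n : nat) (act : G -> V -> V) (pi : G -> E -> E)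
  (phi : {fset V} -> E) :=
  forall g s, simplex_of_dim X n s -> phi (act_simplex act g s) = pi g (phi s).

Definition sim_nu (V : choiceType) (X : {fset V} -> Prop) (n : nat)
  (t : V -> 'I_n.+1) (nu : {fset 'I_n.+1}) (s s' : {fset V}) :=
  simplex_of_dim X n s /\ simplex_of_dim X n s' /\
  exists tau, [/\ X tau, tau `<=` s, tau `<=` s' & stype t tau = nu].

Definition P_nu (V : choiceType) (R : realType) (E : normedModType R)
  (X : {fset V} -> Prop) (n : nat) (t : V -> 'I_n.+1) (nu : {fset 'I_n.+1})
  (phi : {fset V} -> E) (s : {fset V}) : E :=
  let N := [set s' | sim_nu X t nu s' s] in
  (#|` fset_set N|%:R)^-1 *: \sum_(s' \in N) phi s'.

Definition in_image_P_nu (G V : choiceType) (R : realType) (E : normedModType R)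
  (X : {fset V} -> Prop) (n : nat) (t : V -> 'I_n.+1) (act : G -> V -> V)
  (pi : G -> E -> E) (nu : {fset 'I_n.+1}) (phi : {fset V} -> E) :=
  exists2 psi, equivariant X n act pi psi &
    forall s, simplex_of_dim X n s -> phi s = P_nu X t nu psi s.

From HB Require Import structures.
From mathcomp Require Import all_boot all_algebra.
From mathcomp Require Import finmap.
From mathcomp Require Import all_classical all_reals all_analysis.
From mathcomp Require Import zify.
Import GRing.Theory Num.Theory.
Import numFieldNormedType.Exports.
Local Open Scope classical_set_scope.
Local Open Scope fset_scope.
Local Open Scope ring_scope.
Set Implicit Arguments. Unset Strict Implicit.

(** Two gallery-adjacent n-simplices are [~_nu]-equivalent for
   the type [nu] of their common (n-1)-face, and [P_nu psi] is constant on
   [~_nu]-classes; so a map in the image of every [P_nu] with [#|nu| = n] is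
   constant on [X(n)] by gallery connectedness, say equal to [x0].  A
   type-preserving automorphism permutes the [~_nu]-classes, hence [P_nu]
   commutes with the action; evaluated at [g.s] and [s] this gives
   [x0 = pi g x0].  Conversely the constant map [x0] is equivariant and fixed
   by every [P_nu], the [~_nu]-classes being finite (links are finite) and
   nonempty. *)

Section PartiteComplex.
Variables (V : choiceType) (X : {fset V} -> Prop) (n : nat) (t : V -> 'I_n.+1).
Implicit Types (nu : {fset 'I_n.+1}) (s tau : {fset V}).
Hypothesis Hpart : partite X t.

Lemma partite_type_inj s : simplex_of_dim X n s -> {in s &, injective t}.
Proof.
move=> Ss u v us vs tuv; have [x [_ uniq_x]] := Hpart Ss (t u).
by rewrite -(uniq_x u (conj us erefl)) (uniq_x v (conj vs (esym tuv))).
Qed.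

Lemma card_stype s tau :
  simplex_of_dim X n s -> tau `<=` s -> #|` stype t tau| = #|` tau|.
Proof.
move=> Ss /fsubsetP tau_s; rewrite card_in_imfset // => u v /tau_s us /tau_s vs.
exact: partite_type_inj Ss u v us vs.
Qed.

Lemma stype_face_inj s tau1 tau2 :
  simplex_of_dim X n s -> tau1 `<=` s -> tau2 `<=` s ->
  stype t tau1 = stype t tau2 -> tau1 = tau2.
Proof.
move=> Ss.
suff sub a b : a `<=` s -> b `<=` s -> stype t a = stype t b -> a `<=` b.
  move=> s1 s2 e12; apply/eqP.
  by rewrite eqEfsubset (sub tau1 tau2) // (sub tau2 tau1).
move=> /fsubsetP a_s /fsubsetP b_s eab; apply/fsubsetP => v va.
have /imfsetP[w wb tvw] : t v \in stype t b by rewrite -eab in_imfset.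
by rewrite (partite_type_inj Ss (a_s v va) (b_s w wb) tvw).
Qed.

Lemma sim_nu_sym nu s1 s2 : sim_nu X t nu s1 s2 -> sim_nu X t nu s2 s1.
Proof. by move=> [S1 [S2 [tau [? ? ? ?]]]]; do 2!split=> //; exists tau. Qed.

Lemma sim_nu_face_sub nu s' s tau :
  sim_nu X t nu s' s -> tau `<=` s -> stype t tau = nu -> tau `<=` s'.
Proof.
move=> [_ [Ss [tau' [_ t's' t's ty']]]] tau_s ty.
by rewrite -(@stype_face_inj s tau' tau) // ty ty'.
Qed.

Lemma sim_nu_trans nu s1 s2 s3 :
  sim_nu X t nu s1 s2 -> sim_nu X t nu s2 s3 -> sim_nu X t nu s1 s3.
Proof.
move=> h12 [_ [S3 [tau [Xt t2 t3 ty]]]].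
split; first by case: h12.
by split=> //; exists tau; split=> //; exact: sim_nu_face_sub h12 t2 ty.
Qed.

Lemma P_nu_sim (R : realType) (E : normedModType R) nu (psi : {fset V} -> E)
  s1 s2 :
  sim_nu X t nu s1 s2 -> P_nu X t nu psi s1 = P_nu X t nu psi s2.
Proof.
move=> h12; rewrite /P_nu /=.
suff -> : [set s' | sim_nu X t nu s' s1] = [set s' | sim_nu X t nu s' s2] by [].
apply/seteqP; split=> s' /= h; first exact: sim_nu_trans h h12.
exact: sim_nu_trans h (sim_nu_sym h12).
Qed.

Hypothesis HX : simplicial_complex X.

Lemma stype_face_exists nu s : simplex_of_dim X n s -> nu != fset0 ->
  exists tau, [/\ X tau, tau `<=` s & stype t tau = nu].
Proof.
move=> Ss nu0; exists [fset v in s | t v \in nu].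
have sub : [fset v in s | t v \in nu] `<=` s.
  by apply/fsubsetP => v; rewrite !inE => /andP[].
split=> //; last first.
  apply/fsetP => i; apply/imfsetP/idP => [[v] | inu].
    by rewrite !inE => /andP[_ ?] ->.
  by have [v [[vs tv] _]] := Hpart Ss i; exists v; rewrite ?inE ?vs ?tv ?inu.
apply: HX.2 Ss.1 sub _; case/fset0Pn: nu0 => i inu.
have [v [[vs tv] _]] := Hpart Ss i.
by apply/fset0Pn; exists v; rewrite !inE vs tv.
Qed.

Lemma sim_nu_refl nu s :
  simplex_of_dim X n s -> nu != fset0 -> sim_nu X t nu s s.
Proof.
move=> Ss nu0; have [tau [Xtau tau_s ty]] := stype_face_exists Ss nu0.
by do 2!split=> //; exists tau.
Qed.

Hypotheses (Hn : (2 <= n)%N) (Hlink : links_finite_connected X n).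

(* Every [s'] in the class of [s] contains the codimension-one face [tau] of
   [s] of type [nu], so its remaining vertex lies in the link of a codimension-
   two face [rho] of [tau]. *)
Lemma sim_nu_class_finite nu s : simplex_of_dim X n s -> #|` nu| = n ->
  finite_set [set s' | sim_nu X t nu s' s].
Proof.
move=> Ss cnu; have nu0 : nu != fset0 by rewrite -cardfs_gt0 cnu; lia.
have [tau [Xtau tau_s ty]] := stype_face_exists Ss nu0.
have ctau : #|` tau| = n by rewrite -(card_stype Ss tau_s) ty.
have /fset0Pn[u utau] : tau != fset0 by rewrite -cardfs_gt0 ctau; lia.
pose rho := tau `\ u.
have crho : (#|` rho|).+1 = n by rewrite -ctau (cardfsD1 u tau) utau.
have rho_tau : rho `<=` tau := fsubD1set tau u.
have Xrho : X rho by apply: HX.2 Xtau rho_tau _; rewrite -cardfs_gt0; lia.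
have [link_fin _] := Hlink Xrho crho.
apply: (@sub_finite_set _ _
  [set` fpowerset (tau `|` fset_set (link_vertex X rho))]); last first.
  exact: finite_fset.
move=> s' /= s's; have tau_s' := sim_nu_face_sub s's tau_s ty.
rewrite fpowersetE; apply/fsubsetP => w ws'.
rewrite in_fsetU; have [//|wtau /=] := boolP (w \in tau).
rewrite in_fset_set //; apply/mem_set; split.
  by apply: contra wtau => /(fsubsetP rho_tau).
apply: HX.2 s's.1.1 _ _; last by apply/fset0Pn; exists w; rewrite !inE eqxx.
apply/fsubsetP => x; rewrite !inE => /orP[/eqP-> //|/andP[_ xtau]].
exact: (fsubsetP tau_s').
Qed.

End PartiteComplex.

Lemma P_nu_cst (R : realType) (E : normedModType R) (V : choiceType)
  (X : {fset V} -> Prop) (n : nat) (t : V -> 'I_n.+1)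
  (nu : {fset 'I_n.+1}) (s : {fset V}) (x : E) :
  finite_set [set s' | sim_nu X t nu s' s] -> sim_nu X t nu s s ->
  P_nu X t nu (fun=> x) s = x.
Proof.
rewrite /P_nu /=; set N := [set s' | _] => Nfin Ns.
have sN : s \in fset_set N by rewrite in_fset_set // inE.
have N_gt0 : (0 < #|` fset_set N|)%N.
  by rewrite cardfs_gt0; apply/fset0Pn; exists s.
rewrite fsbig_finite // big_const_seq count_predT iter_addr_0.
rewrite -[x *+ _](@scaler_nat R) scalerA mulVf ?scale1r //.
by rewrite pnatr_eq0 -lt0n.
Qed.

Lemma imfsetK (T : choiceType) (a b : T -> T) : cancel a b ->
  forall s : {fset T}, [fset b x | x in [fset a x | x in s]] = s.
Proof.
move=> aK s; apply/fsetP => v.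
apply/imfsetP/idP => [[_ /imfsetP[x xs ->] ->] | vs].
  by rewrite aK.
by exists (a v); [apply/imfsetP; exists v | rewrite aK].
Qed.

Section SimplicialMap.
Variables (V : choiceType) (X : {fset V} -> Prop) (n : nat) (t : V -> 'I_n.+1).
Implicit Types (nu : {fset 'I_n.+1}) (s tau : {fset V}).
Variable f : V -> V.
Hypotheses (f_inj : injective f) (Xf : forall s, X s <-> X [fset f x | x in s])
  (tf : forall v, t (f v) = t v).

Lemma simplex_of_dim_imfset s :
  simplex_of_dim X n s -> simplex_of_dim X n [fset f x | x in s].
Proof. by move=> [Xs cs]; split; [exact: (Xf s).1 | rewrite card_imfset]. Qed.

Lemma stype_imfset tau : stype t [fset f x | x in tau] = stype t tau.
Proof.
apply/fsetP => i.
apply/imfsetP/imfsetP => [[_ /imfsetP[x xt ->] ->] | [x xt ->]].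
  by exists x; rewrite ?tf.
by exists (f x); [apply/imfsetP; exists x | rewrite tf].
Qed.

Lemma sim_nu_imfset nu s' s : sim_nu X t nu s' s ->
  sim_nu X t nu [fset f x | x in s'] [fset f x | x in s].
Proof.
move=> [S' [Ss [tau [Xt t1 t2 ty]]]].
split; first exact: simplex_of_dim_imfset.
split; first exact: simplex_of_dim_imfset.
exists [fset f x | x in tau]; split; rewrite ?stype_imfset //.
- exact: (Xf tau).1.
- exact/subset_imfset/fsubsetP.
- exact/subset_imfset/fsubsetP.
Qed.

End SimplicialMap.

Section Automorphism.
Variables (V : choiceType) (X : {fset V} -> Prop) (n : nat) (t : V -> 'I_n.+1).
Implicit Types (nu : {fset 'I_n.+1}) (s : {fset V}).
Variables f h : V -> V.
Hypotheses (fK : cancel f h) (hK : cancel h f).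
Hypotheses (Xf : forall s, X s <-> X [fset f x | x in s])
  (tf : forall v, t (f v) = t v).

Let Xh s : X s <-> X [fset h x | x in s].
Proof. by have := Xf [fset h x | x in s]; rewrite imfsetK // => -[]. Qed.

Let th v : t (h v) = t v.
Proof. by rewrite -[in t v](hK v) tf. Qed.

Lemma sim_nu_class_imfset nu s :
  [set s' | sim_nu X t nu s' [fset f x | x in s]] =
  ((fun s0 => [fset f x | x in s0]) @` [set s' | sim_nu X t nu s' s])%classic.
Proof.
apply/seteqP; split=> [s' /= hs' | _ [s' hs' <-]].
  exists [fset h x | x in s']; last by rewrite imfsetK.
  rewrite /= -[s](imfsetK fK).
  exact: sim_nu_imfset (can_inj hK) Xh th _ _ _ hs'.
exact: sim_nu_imfset (can_inj fK) Xf tf _ _ _ hs'.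
Qed.

Variables (R : realType) (E : normedModType R) (A : E -> E).
Hypothesis linA : linear A.
HB.instance Definition _ := GRing.isLinear.Build R E E *:%R A linA.

Lemma P_nu_imfset nu (psi : {fset V} -> E) s :
  finite_set [set s' | sim_nu X t nu s' s] ->
  (forall s', simplex_of_dim X n s' -> psi [fset f x | x in s'] = A (psi s')) ->
  P_nu X t nu psi [fset f x | x in s] = A (P_nu X t nu psi s).
Proof.
move=> Nfin psiA; rewrite /P_nu /= sim_nu_class_imfset.
have f_inj : injective (fun s0 : {fset V} => [fset f x | x in s0]).
  exact: (@can_inj _ _ _ (fun s0 => [fset h x | x in s0]) (imfsetK fK)).
rewrite fset_set_image // card_imfset // fsbig_image; last first.
  by move=> ? ? _ _ /f_inj.
rewrite linearZ /=; congr (_ *: _).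
rewrite (eq_fsbigr (fun s' => A (psi s'))); last by move=> s' /[!inE] -[/psiA].
by rewrite !fsbig_finite // linear_sum.
Qed.

End Automorphism.

Lemma group_laws_mulV (G : Type) (mul : G -> G -> G) (inv : G -> G) (e : G) :
  group_laws mul inv e -> forall x, mul x (inv x) = e.
Proof.
case=> mulA mul1 mulV.
have idem_e y : mul y y = y -> y = e.
  by move=> yy; rewrite -(mul1 y) -(mulV y) -mulA yy.
by move=> x; apply: idem_e; rewrite -mulA (mulA (inv x) x) mulV mul1.
Qed.

Lemma in_image_P_nu_gallery_adj (G V : choiceType) (R : realType)
  (E : normedModType R)
  (X : {fset V} -> Prop) (n : nat) (t : V -> 'I_n.+1) (act : G -> V -> V)
  (pi : G -> E -> E) (phi : {fset V} -> E) :
  partite X t ->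
  (forall nu, #|` nu| = n -> in_image_P_nu X t act pi nu phi) ->
  forall a b, gallery_adj X n a b -> phi a = phi b.
Proof.
move=> Hpart Him a b [Sa [Sb [tau [Xt ct ta tb]]]].
have [psi _ Hphi] := Him _ (etrans (card_stype Hpart Sa ta) ct).
rewrite (Hphi a Sa) (Hphi b Sb); apply: (P_nu_sim Hpart).
by do 2!split=> //; exists tau.
Qed.

Lemma gallery_connected_const (V : choiceType) (T : Type) (X : {fset V} -> Prop)
  (n : nat) (phi : {fset V} -> T) :
  gallery_connected X n -> (forall a b, gallery_adj X n a b -> phi a = phi b) ->
  forall s s0, simplex_of_dim X n s -> simplex_of_dim X n s0 -> phi s = phi s0.
Proof.
move=> Hgal adj s s0 Ss S0.
by elim: (Hgal _ _ Ss S0) => [x y /adj | | x y z _ -> _ ->].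
Qed.

Theorem lemma3p5
  (R : realType) (E : completeNormedModType R)
  (G : topologicalType) (mul : G -> G -> G) (inv : G -> G) (e : G)
  (HG : lc_topological_group mul inv e)
  (V : choiceType) (X : {fset V} -> Prop) (n : nat) (t : V -> 'I_n.+1)
  (Hn : (2 <= n)%N)
  (HX : simplicial_complex X) (Hpure : pure_dim X n) (Hpart : partite X t)
  (Hgal : gallery_connected X n) (Hlink : links_finite_connected X n)
  (act : G -> V -> V) (Hact : type_preserving_action mul e X t act)
  (Hcoc : cocompact X n act)
  (Hstab : forall tau, X tau -> (n <= #|` tau|.+1)%N ->
             open (stabilizer act tau) /\ compact (stabilizer act tau))
  (pi : G -> E -> E) (Hpi : strongly_continuous_rep mul e pi) :
  forall phi : {fset V} -> E,
    (forall nu : {fset 'I_n.+1}, #|` nu| = n -> in_image_P_nu X t act pi nu phi)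
    <->
    (exists x0 : E, (forall g, pi g x0 = x0) /\
       forall s, simplex_of_dim X n s -> phi s = x0).
Proof.
have [grp _ _ _ _] := HG; have [_ _ mulVg] := grp.
have [act1 actM Xact tact] := Hact; have [pi_lin _ _ _ _] := Hpi.
have actK g : cancel (act g) (act (inv g)).
  by move=> v; rewrite -actM mulVg act1.
have actVK g : cancel (act (inv g)) (act g).
  by move=> v; rewrite -actM (group_laws_mulV grp) act1.
have class_fin := sim_nu_class_finite Hpart HX Hn Hlink.
move=> phi; split=> [Him | [x0 [x0_fix phi_x0]] nu cnu].
- have [[s0 S0] | no_simplex] :=
    pselect (exists s, simplex_of_dim X n s); last first.
    exists 0; split=> [g | s Ss]; last by case: no_simplex; exists s.
    by have := pi_lin g (-1) 0 0; rewrite !scaleN1r oppr0 addr0 addNr.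
  have phi_const :=
    gallery_connected_const Hgal (in_image_P_nu_gallery_adj Hpart Him).
  exists (phi s0); split=> [g | s Ss]; last exact: phi_const.
  have [nu cnu] : exists nu : {fset 'I_n.+1}, #|` nu| = n.
    exists [fset i in predC1 ord0].
    by rewrite card_imfset //= -cardE cardC1 card_ord.
  have [psi psi_eq Hphi] := Him nu cnu.
  have Sg := simplex_of_dim_imfset (can_inj (actK g)) (Xact g) S0.
  rewrite -{2}(phi_const _ _ Sg S0) (Hphi _ Sg) (Hphi _ S0) /act_simplex.
  symmetry.
  apply: (P_nu_imfset (actK g) (actVK g) (Xact g) (tact g) (pi_lin g)).
    exact: class_fin S0 cnu.
  exact: psi_eq.
- exists (fun=> x0) => [g s _ | s Ss]; first by rewrite x0_fix.
  rewrite phi_x0 // P_nu_cst //; first exact: class_fin.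
  by apply: (sim_nu_refl Hpart HX Ss); rewrite -cardfs_gt0 cnu; lia.
Qed.
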